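(* Let $(S_n)_{n\ge0}$ be defined by $S_0=3$, $S_1=1$, $S_2=3$ and $S_{n+1}=S_n+S_{n-1}+S_{n-2}$ for $n\ge 2$. Let $\alpha,\beta,\gamma$ be the roots of $x^3-x^2-x-1=0$ and $C_n=\alpha^n\beta^n+\alpha^n\gamma^n+\beta^n\gamma^n$ for $n\ge0$. Then for all integers $n,m\ge 0$: if $n\ge m$, $$S_nS_{n+m}=S_{2n+m}+S_mC_n-C_{n-m};$$ if $n<m$, $$S_nS_{n+m}=S_{2n+m}+S_mC_n-S_{m-n}.$$
   Context: $S_n$ is the generalized Lucas (generalized Tribonacci) sequence; it satisfies $S_n=\alpha^n+\beta^n+\gamma^n$. *)

From mathcomp Require Import all_boot all_order all_algebra all_field.
Set Implicit Arguments. Unset Strict Implicit. Unset Printing Implicit Defensive.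
Import GRing.Theory Num.Theory.
Local Open Scope ring_scope.

Fixpoint Sseq (n : nat) : int :=
  match n with
  | 0 => 3
  | 1 => 1
  | 2 => 3
  | (((k.+1) as k1).+1 as k2).+1 => Sseq k2 + Sseq k1 + Sseq k
  end.

Definition Cseq (a b c : algC) (n : nat) : algC :=
  a ^+ n * b ^+ n + a ^+ n * c ^+ n + b ^+ n * c ^+ n.

Lemma Sseq_test : [:: Sseq 0; Sseq 1; Sseq 2; Sseq 3; Sseq 4; Sseq 5] = [:: 3; 1; 3; 7; 11; 21].
Proof. by []. Qed.

From mathcomp Require Import all_boot all_order all_algebra all_field.
From mathcomp Require Import ring.
Set Implicit Arguments. Unset Strict Implicit. Unset Printing Implicit Defensive.
Import GRing.Theory Num.Theory.
Local Open Scope ring_scope.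

(* With p_k = α^k + β^k + γ^k, Vieta's formulas e1 = 1, e2 = -1, e3 = 1 and
   Newton's recurrence for power sums give S_k = p_k.  Expanding p_n p_(n+m)
   and p_m C_n, the mixed terms α^n β^(n+m) over ordered pairs of distinct
   roots agree; what is left of p_m C_n is the sum of the α^m β^n γ^n, which
   is (αβγ)^m C_(n-m) when m <= n and (αβγ)^n p_(m-n) when n < m, and
   αβγ = 1. *)

Section PowerSums.

Variables (R : comPzRingType) (x y z : R).

Definition pow_sum3 (k : nat) : R := x ^+ k + y ^+ k + z ^+ k.

Definition pow_sigma2 (k : nat) : R :=
  x ^+ k * y ^+ k + x ^+ k * z ^+ k + y ^+ k * z ^+ k.

Lemma pow_sum3_recurrence (k : nat) :
  pow_sum3 k.+3 = (x + y + z) * pow_sum3 k.+2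
                  - (x * y + x * z + y * z) * pow_sum3 k.+1
                  + x * y * z * pow_sum3 k.
Proof. by rewrite /pow_sum3 !exprS; ring. Qed.

Lemma pow_sum3_mul_le (n m : nat) : (m <= n)%N ->
  pow_sum3 n * pow_sum3 (n + m) =
  pow_sum3 (2 * n + m) + pow_sum3 m * pow_sigma2 n
  - (x * y * z) ^+ m * pow_sigma2 (n - m).
Proof.
move=> /subnK <-; set k := (n - m)%N.
have -> : (2 * (k + m) + m = k + k + m + m + m)%N by rewrite mul2n -addnn; ring.
by rewrite addnK /pow_sum3 /pow_sigma2 !exprMn !exprD; ring.
Qed.

Lemma pow_sum3_mul_gt (n m : nat) : (n < m)%N ->
  pow_sum3 n * pow_sum3 (n + m) =
  pow_sum3 (2 * n + m) + pow_sum3 m * pow_sigma2 n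
  - (x * y * z) ^+ n * pow_sum3 (m - n).
Proof.
move=> /ltnW /subnKC <-; set k := (m - n)%N.
have -> : (2 * n + (n + k) = n + n + n + k)%N by rewrite mul2n -addnn; ring.
by rewrite addKn /pow_sum3 /pow_sigma2 !exprMn !exprD; ring.
Qed.

Lemma Sseq_pow_sum3 :
  x + y + z = 1 -> x * y + x * z + y * z = -1 -> x * y * z = 1 ->
  forall n, (Sseq n)%:~R = pow_sum3 n.
Proof.
move=> e1 e2 e3; elim/ltn_ind=> -[|[|[|n]]] IH.
- by rewrite /pow_sum3 !expr0; ring.
- by rewrite /pow_sum3 !expr1 e1.
- have -> : pow_sum3 2 = (x + y + z) ^+ 2 - 2 * (x * y + x * z + y * z).
    by rewrite /pow_sum3; ring.
  by rewrite e1 e2; ring.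
have -> : Sseq n.+3 = Sseq n.+2 + Sseq n.+1 + Sseq n by [].
by rewrite pow_sum3_recurrence e1 e2 e3 !intrD !IH ?ltnS ?leqW //; ring.
Qed.

End PowerSums.

Lemma prod_XsubC3 (R : comNzRingType) (a b c : R) :
  ('X - a%:P) * ('X - b%:P) * ('X - c%:P) =
  'X^3 - (a + b + c)%:P * 'X^2 + (a * b + a * c + b * c)%:P * 'X
  - (a * b * c)%:P.
Proof. by rewrite !rmorphD !rmorphM /=; ring. Qed.

Lemma tribonacci_vieta (R : comNzRingType) (a b c : R) :
  ('X^3 - 'X^2 - 'X - 1 : {poly R}) = ('X - a%:P) * ('X - b%:P) * ('X - c%:P) ->
  [/\ a + b + c = 1, a * b + a * c + b * c = -1 & a * b * c = 1].
Proof.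
rewrite prod_XsubC3 => h.
have coef i := congr1 (fun p : {poly R} => p`_i) h.
move: (coef 0%N) (coef 1%N) (coef 2%N).
rewrite !(coefB, coefD, coefMX, coefCM, coefXn, coefX, coefC) /=.
rewrite !(oppr0, sub0r, subr0, add0r, addr0, mulr0, mulr1) => h0 h1 h2.
by split; [exact: oppr_inj | exact/esym | exact: oppr_inj].
Qed.

Theorem mainTheorem3 (a b c : algC)
  (habc : ('X^3 - 'X^2 - 'X - 1 : {poly algC}) =
          ('X - a%:P) * ('X - b%:P) * ('X - c%:P)) (n m : nat) :
  ((m <= n)%N ->
     (Sseq n)%:~R * (Sseq (n + m))%:~R =
     (Sseq (2 * n + m))%:~R + (Sseq m)%:~R * Cseq a b c n - Cseq a b c (n - m)
       :> algC) /\
  ((n < m)%N ->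
     (Sseq n)%:~R * (Sseq (n + m))%:~R =
     (Sseq (2 * n + m))%:~R + (Sseq m)%:~R * Cseq a b c n - (Sseq (m - n))%:~R
       :> algC).
Proof.
have [e1 e2 e3] := tribonacci_vieta habc.
have -> : Cseq a b c = pow_sigma2 a b c by [].
rewrite !(Sseq_pow_sum3 e1 e2 e3).
split=> [le_mn | lt_nm].
- by move: (pow_sum3_mul_le a b c le_mn); rewrite e3 expr1n mul1r.
- by move: (pow_sum3_mul_gt a b c lt_nm); rewrite e3 expr1n mul1r.
Qed.
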